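(* Let $(N,+,* )$ be a planar nearring, presented by $(\Phi,R,M)$ as in the context. If $d\in D(N)$, then $d\Phi^*=d\Phi\cup\{0\}$ is closed under addition.
   Context: A (right) nearring $(N,+,* )$ is a set with a group $(N,+)$ (identity $0$, not necessarily abelian), a semigroup $(N,* )$, and right distributivity $(a+b)*c=a*c+b*c$ for all $a,b,c$. Elements $a,b$ are equivalent multipliers, $a\cong b$, if $x*a=x*b$ for all $x\in N$. $N$ is planar if $\cong$ has at least $3$ classes and for all $a,b,c\in N$ with $a\not\cong b$ the equation $x*a=x*b+c$ has a unique solution $x\in N$. Every planar nearring arises as follows, and we always consider it so presented. $\Phi\le \mathrm{Aut}(N,+)$ is a group of automorphisms acting on the right ($n\mapsto n\phi$), fixed point free (for $\phi\ne\mathrm{id}$, $n\phi=n$ iff $n=0$), and such that $n\mapsto -n+n\phi$ is bijective for every $\phi\ne \mathrm{id}$. $R$ is a set of representatives of the $\Phi$-orbits of $N\setminus\{0\}$ and $M\subseteq R$. Each $a\ne 0$ is uniquely $a=r_a\phi_a$ with $r_a\in R$, $\phi_a\in\Phi$. The multiplication is $a*b=0$ if $b=0$ or $r_b\in M$, and $a*b=a\phi_b$ otherwise (with $0*b=0$). For $a\in N$, $a\Phi$ is its orbit and $a\Phi^*=a\Phi\cup\{0\}$. The zero multipliers are the elements of $M\Phi\cup\{0\}$; equivalently $n$ is a zero multiplier iff $x*n=0$ for all $x\in N$. $D(N)=\{n\in N: n*(a+b)=n*a+n*b \text{ for all } a,b\in N\}$ is the set of distributive elements. $Z(\Phi)$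 is the centre of $\Phi$. *)

From Stdlib Require Import Classical.

Set Implicit Arguments.

Definition is_group (N : Type) (add : N -> N -> N) (opp : N -> N) (zero : N) : Prop :=
  (forall a b c, add (add a b) c = add a (add b c)) /\
  (forall a, add zero a = a /\ add a zero = a) /\
  (forall a, add (opp a) a = zero /\ add a (opp a) = zero).

Definition is_aut (N : Type) (add : N -> N -> N) (phi : N -> N) : Prop :=
  (forall a b, phi (add a b) = add (phi a) (phi b)) /\
  (forall a b, phi a = phi b -> a = b) /\
  (forall b, exists a, phi a = b).

Definition bijective_fun (N : Type) (f : N -> N) : Prop :=
  (forall a b, f a = f b -> a = b) /\ (forall b, exists a, f a = b).

Definition not_id (N : Type) (phi : N -> N) : Prop := exists n, phi n <> n.

Definition ferrero_group (N : Type) (add : N -> N -> N) (opp : N -> N) (zero : N)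
    (Phi : (N -> N) -> Prop) : Prop :=
  (forall phi, Phi phi -> is_aut add phi) /\
  Phi (fun n => n) /\
  (forall phi psi, Phi phi -> Phi psi -> Phi (fun n => psi (phi n))) /\
  (forall phi, Phi phi -> exists psi, Phi psi /\
       (forall n, psi (phi n) = n) /\ (forall n, phi (psi n) = n)) /\
  (forall phi, Phi phi -> not_id phi -> forall n, phi n = n -> n = zero) /\
  (forall phi, Phi phi -> not_id phi -> bijective_fun (fun n => add (opp n) (phi n))).

Definition orbit_reps (N : Type) (zero : N) (Phi : (N -> N) -> Prop) (R : N -> Prop) : Prop :=
  (forall r, R r -> r <> zero) /\
  (forall a, a <> zero -> exists r phi, R r /\ Phi phi /\ a = phi r) /\
  (forall r1 r2 phi1 phi2, R r1 -> R r2 -> Phi phi1 -> Phi phi2 ->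
      phi1 r1 = phi2 r2 -> r1 = r2).

Definition presented_mul (N : Type) (zero : N) (Phi : (N -> N) -> Prop)
    (R M : N -> Prop) (mul : N -> N -> N) : Prop :=
  (forall a, mul a zero = zero) /\
  (forall a b r phi, R r -> Phi phi -> b = phi r ->
      (M r -> mul a b = zero) /\ (~ M r -> mul a b = phi a)).

Definition equiv_mult (N : Type) (mul : N -> N -> N) (a b : N) : Prop :=
  forall x, mul x a = mul x b.

Definition planar (N : Type) (add : N -> N -> N) (mul : N -> N -> N) : Prop :=
  (exists a b c, ~ equiv_mult mul a b /\ ~ equiv_mult mul a c /\ ~ equiv_mult mul b c) /\
  (forall a b c, ~ equiv_mult mul a b ->
     exists x, mul x a = add (mul x b) c /\
       forall y, mul y a = add (mul y b) c -> y = x).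

Definition distributive_elt (N : Type) (add : N -> N -> N) (mul : N -> N -> N) (n : N) : Prop :=
  forall a b, mul n (add a b) = add (mul n a) (mul n b).

Definition orbit0 (N : Type) (zero : N) (Phi : (N -> N) -> Prop) (d : N) (x : N) : Prop :=
  x = zero \/ exists phi, Phi phi /\ x = phi d.

(* The left multiples of [d] are exactly [d Phi^*]: a product [d * n] is [0] or
   [d phi_n], and conversely [d phi = d * (r phi)] for any representative [r]
   outside [M], which exists because a planar nearring has non-equivalent
   multipliers. Distributivity of [d] then gives [d * a + d * b = d * (a + b)]. *)

From Stdlib Require Import Classical.

Set Implicit Arguments.

Section PresentedMultiplication.

Variables (N : Type) (zero : N) (Phi : (N -> N) -> Prop) (R M : N -> Prop)
  (mul : N -> N -> N).
Hypothesis HR : orbit_reps zero Phi R.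
Hypothesis Hmul : presented_mul zero Phi R M mul.

Lemma mul_in_orbit0 (d n : N) : orbit0 zero Phi d (mul d n).
Proof.
  destruct HR as [_ [HRex _]]; destruct Hmul as [Hm0 Hmr].
  destruct (classic (n = zero)) as [-> | Hn].
  - left; apply Hm0.
  - destruct (HRex n Hn) as [r [phi [Hr [Hphi Hn_eq]]]].
    destruct (Hmr d n r phi Hr Hphi Hn_eq) as [Hmul_zero Hmul_aut].
    destruct (classic (M r)) as [HMr | HMr].
    + left; auto.
    + right; exists phi; auto.
Qed.

Lemma zero_multipliers_equiv :
  (forall r, R r -> M r) -> forall a b, equiv_mult mul a b.
Proof.
  destruct HR as [_ [HRex _]]; destruct Hmul as [Hm0 Hmr].
  intros HallM a b x.
  assert (Hzero : forall c, mul x c = zero).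
  { intro c; destruct (classic (c = zero)) as [-> | Hc]; [apply Hm0 |].
    destruct (HRex c Hc) as [r [phi [Hr [Hphi Hc_eq]]]].
    apply (Hmr x c r phi Hr Hphi Hc_eq); auto. }
  now rewrite !Hzero.
Qed.

Lemma orbit0_mul_surj {r d z : N} :
  R r -> ~ M r -> orbit0 zero Phi d z -> exists n, mul d n = z.
Proof.
  destruct Hmul as [Hm0 Hmr].
  intros Hr HMr [-> | [phi [Hphi ->]]].
  - exists zero; apply Hm0.
  - exists (phi r); apply (Hmr d (phi r) r phi Hr Hphi eq_refl); exact HMr.
Qed.

End PresentedMultiplication.

Lemma planar_exists_nonzero_multiplier (N : Type) (add : N -> N -> N) (zero : N)
    (Phi : (N -> N) -> Prop) (R M : N -> Prop) (mul : N -> N -> N) :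
  orbit_reps zero Phi R -> presented_mul zero Phi R M mul -> planar add mul ->
  exists r, R r /\ ~ M r.
Proof.
  intros HR Hmul [[a [b [_ [Hab _]]]] _].
  apply NNPP; intro Hnone; apply Hab.
  apply (zero_multipliers_equiv HR Hmul).
  intros r Hr; apply NNPP; intro HMr; apply Hnone; eauto.
Qed.

Theorem mainTheorem1 (N : Type) (add : N -> N -> N) (opp : N -> N) (zero : N)
    (Phi : (N -> N) -> Prop) (R M : N -> Prop) (mul : N -> N -> N)
    (Hgrp : is_group add opp zero)
    (HPhi : ferrero_group add opp zero Phi)
    (HR : orbit_reps zero Phi R)
    (HM : forall m, M m -> R m)
    (Hmul : presented_mul zero Phi R M mul)
    (Hplanar : planar add mul)
    (d : N) (Hd : distributive_elt add mul d) :
  forall x y, orbit0 zero Phi d x -> orbit0 zero Phi d y -> orbit0 zero Phi d (add x y).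
Proof.
  intros x y Hx Hy.
  destruct (planar_exists_nonzero_multiplier HR Hmul Hplanar) as [r [Hr HMr]].
  destruct (orbit0_mul_surj Hmul Hr HMr Hx) as [a <-].
  destruct (orbit0_mul_surj Hmul Hr HMr Hy) as [b <-].
  rewrite <- Hd; apply (mul_in_orbit0 HR Hmul).
Qed.
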